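(* Let $V\in\mathcal{R}$ be built from $v\in\mathcal{F}$, and let $(v_n)$ be any generating sequence of $V$ starting from $v_0=v$ (i.e. $v_{n+1}$ built from $v_n$ and $V$ extends every $v_n$). Then $L(v_n,v)=\dfrac{\rho_{v_n}-\rho_v}{1+\rho_{v_n}}$ for every $n\ge1$, the limit $L(V,v)=\lim_n L(v_n,v)$ exists and does not depend on the choice of $(v_n)$, and $$L(V,v)=\frac{\rho_V-\rho_v}{1+\rho_V}=1-\frac{1+\rho_v}{1+\rho_V}$$ when $V\in\mathcal{R}^*$, while $L(V,v)=1$ when $V\notin\mathcal{R}^*$. Moreover, if $V\in\mathcal{R}^*$ then $0<L(V,v)<1$, and for any generating sequence $(u_n)$ of $V$ the sequence $L(V,u_n)$ is nonincreasing with limit $0$.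
   Context: $\mathcal F$ = finite $\{0,1\}$-words starting and ending with $0$; $Y,Z$ count $1$s and $0$s, $\rho_\alpha=Y(\alpha)/Z(\alpha)$. $u$ built from $v$: $u=v1^{a_1}v\cdots v1^{a_{q-1}}v$ ($q\ge2$, $a_i\ge0$). Generating sequence (in general, starting from $v_0=0$): $v_{n+1}$ built from $v_n$. $\mathcal R$: aperiodic $V\in\{0,1\}^{\mathbb N}$ extending all $v_n$ of some generating sequence. $V$ built from $v$: $V=v1^{a_1}v1^{a_2}v\cdots$ with $a_i\ge0$. For $V\in\mathcal R$, $\rho_V=\lim_n\rho_{v_n}\in[0,\infty]$ for any generating sequence $(v_n)$ of $V$ (this limit is independent of the sequence), and $\mathcal R^*=\{V\in\mathcal R:\rho_V<\infty\}$. For $\alpha,\beta\in\mathcal F$ with $\alpha=\beta1^{a_1}\beta\cdots\beta1^{a_{q-1}}\beta$, $L(\alpha,\beta)=\frac{1}{\mathrm{lh}(\alpha)}\sum_{j=1}^{q-1}a_j$. *)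

From Stdlib Require Import Reals Lra Lia Arith List ClassicalEpsilon.
Import ListNotations.
Open Scope R_scope.

(* Finite {0,1}-words: lists of bool, with false = 0 and true = 1. *)
Definition word := list bool.

Definition inF (w : word) : Prop :=
  w <> [] /\ hd true w = false /\ last w true = false.

Definition Y (w : word) : nat := count_occ Bool.bool_dec w true.
Definition Z (w : word) : nat := count_occ Bool.bool_dec w false.
Definition rho (w : word) : R := INR (Y w) / INR (Z w).

(* u = v 1^{a_1} v ... v 1^{a_{q-1}} v with a = [a_1;...;a_{q-1}] *)
Definition concat_blocks (v : word) (a : list nat) : word :=
  v ++ flat_map (fun k => repeat true k ++ v) a.

(* u built from v (q >= 2, i.e. at least one gap) *)
Definition built (u v : word) : Prop :=
  exists a : list nat, (1 <= length a)%nat /\ u = concat_blocks v a.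

(* L(alpha, beta) = (sum_j a_j) / lh(alpha), where alpha = beta 1^{a_1} beta ... beta.
   The exponent list is chosen by (classical) description; it is unique
   whenever alpha is built from beta. *)
Definition L (alpha beta : word) : R :=
  INR (list_sum (epsilon (inhabits (@nil nat))
                   (fun a => alpha = concat_blocks beta a)))
  / INR (length alpha).

Definition extends (V : nat -> bool) (w : word) : Prop :=
  forall i, (i < length w)%nat -> V i = nth i w false.

Definition gen_seq (w0 : word) (V : nat -> bool) (ws : nat -> word) : Prop :=
  ws 0%nat = w0 /\ (forall n, built (ws (S n)) (ws n)) /\ (forall n, extends V (ws n)).

Definition aperiodic (V : nat -> bool) : Prop :=
  ~ (exists p N : nat, (0 < p)%nat /\ forall n, (N <= n)%nat -> V (n + p)%nat = V n).

Definition inR (V : nat -> bool) : Prop :=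
  aperiodic V /\ exists ws, gen_seq [false] V ws.

(* Start positions of the blocks in V = v 1^{a_0} v 1^{a_1} v ... *)
Fixpoint block_pos (len : nat) (a : nat -> nat) (k : nat) : nat :=
  match k with
  | O => O
  | S k' => (block_pos len a k' + len + a k')%nat
  end.

(* V built from v : V = v 1^{a_1} v 1^{a_2} v ... *)
Definition V_built (V : nat -> bool) (v : word) : Prop :=
  exists a : nat -> nat, forall k,
    (forall i, (i < length v)%nat -> V (block_pos (length v) a k + i)%nat = nth i v false) /\
    (forall j, (j < a k)%nat -> V (block_pos (length v) a k + length v + j)%nat = true).

(* Extended nonnegative reals [0, +oo] for rho_V *)
Inductive ER := Fin (r : R) | PInf.

Definition tends (u : nat -> R) (x : ER) : Prop :=
  match x with
  | Fin r => Un_cv u r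
  | PInf => cv_infty u
  end.

Definition rhoV_is (V : nat -> bool) (x : ER) : Prop :=
  forall ws, gen_seq [false] V ws -> tends (fun n => rho (ws n)) x.

Definition inRstar (V : nat -> bool) : Prop :=
  inR V /\ exists r : R, rhoV_is V (Fin r).

Definition LV_is (V : nat -> bool) (u : word) (l : R) : Prop :=
  (exists ws, gen_seq u V ws) /\
  (forall ws, gen_seq u V ws -> Un_cv (fun n => L (ws n) u) l).

From Pilot Require Import Defs.
From Stdlib Require Import Reals List.
Import ListNotations.
Open Scope R_scope.
From Stdlib Require Import Lra Lia ClassicalEpsilon Classical.
(* Re-import so that [Z] is the number of 0s, not the type of binary integers. *)
Import Defs.

(* Everything reduces to slopes.  If [alpha = beta 1^{a_1} beta ... beta] with
   q copies of [beta], then Z(alpha) = q Z(beta) and Y(alpha) = q Y(beta) + sum a,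
   hence L(alpha, beta) = (rho alpha - rho beta)/(1 + rho alpha), and the slopes
   rho(v_n) of a generating sequence are nondecreasing.
   The key combinatorial estimate is that a prefix P of a block word over u
   has slope at least rho(u) (1 - |u|/|P|); since the terms of any two
   generating sequences of V are prefixes of one another, the slopes along
   all generating sequences have the same limit rho_V in [0, +oo].  Aperiodicity
   of V makes rho_V > rho(v).  The theorem then follows from the behaviour of
   x |-> (x - c)/(1 + x): continuity at a finite limit, and limit 1 at +oo. *)

Lemma Y_plus_Z (w : word) : (Y w + Z w)%nat = length w.
Proof.
  induction w as [|b w IH]; unfold Y, Z in *; simpl; auto.
  destruct b; simpl; lia.
Qed.

Lemma Y_app (w w' : word) : Y (w ++ w') = (Y w + Y w')%nat.
Proof. apply count_occ_app. Qed.

Lemma Z_app (w w' : word) : Z (w ++ w') = (Z w + Z w')%nat.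
Proof. apply count_occ_app. Qed.

Lemma Y_repeat (k : nat) : Y (repeat true k) = k.
Proof. apply count_occ_repeat_eq; auto. Qed.

Lemma Z_repeat (k : nat) : Z (repeat true k) = 0%nat.
Proof. apply count_occ_repeat_neq; discriminate. Qed.

Lemma Z_firstn_le (n : nat) (w : word) : (Z (firstn n w) <= Z w)%nat.
Proof. rewrite <- (firstn_skipn n w) at 2. rewrite Z_app. lia. Qed.

Lemma rho_nonneg (w : word) : 0 <= rho w.
Proof.
  unfold rho. destruct (Nat.eq_dec (Z w) 0) as [e|n].
  - rewrite e. simpl. unfold Rdiv. rewrite Rinv_0. lra.
  - apply Rle_mult_inv_pos; [apply pos_INR | apply lt_0_INR; lia].
Qed.

(** A word of F contains a 0, so its slope is a genuine quotient. *)
Lemma inF_Z_pos (v : word) : inF v -> (0 < Z v)%nat.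
Proof.
  intros [Hne [Hhd _]]. destruct v as [|b v]; [congruence|].
  simpl in Hhd. subst b. unfold Z. simpl. lia.
Qed.

Lemma concat_blocks_nil (v : word) : concat_blocks v [] = v.
Proof. unfold concat_blocks; simpl; apply app_nil_r. Qed.

Lemma concat_blocks_cons (v : word) (k : nat) (a : list nat) :
  concat_blocks v (k :: a) = v ++ repeat true k ++ concat_blocks v a.
Proof. unfold concat_blocks; simpl; rewrite !app_assoc; auto. Qed.

Lemma concat_blocks_app (v : word) (a c : list nat) (k : nat) :
  concat_blocks v (a ++ k :: c) =
  concat_blocks v a ++ repeat true k ++ concat_blocks v c.
Proof.
  induction a as [|x a IH]; simpl.
  - rewrite concat_blocks_cons, concat_blocks_nil; auto.
  - rewrite !concat_blocks_cons, IH, !app_assoc; auto.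
Qed.

(** "Built from" is transitive: a block word over a block word over [v]
    is itself a block word over [v]. *)
Lemma concat_blocks_trans (v : word) (a b : list nat) :
  concat_blocks (concat_blocks v a) b =
  concat_blocks v (a ++ flat_map (fun k => k :: a) b).
Proof.
  induction b as [|k b IH]; simpl.
  - rewrite concat_blocks_nil, app_nil_r; auto.
  - rewrite concat_blocks_cons, IH, concat_blocks_app; auto.
Qed.

Lemma Z_concat_blocks (v : word) (a : list nat) :
  Z (concat_blocks v a) = ((length a + 1) * Z v)%nat.
Proof.
  induction a as [|k a IH]; simpl.
  - rewrite concat_blocks_nil; lia.
  - rewrite concat_blocks_cons, !Z_app, Z_repeat, IH; lia.
Qed.

Lemma Y_concat_blocks (v : word) (a : list nat) :
  Y (concat_blocks v a) = ((length a + 1) * Y v + list_sum a)%nat.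
Proof.
  induction a as [|k a IH]; simpl.
  - rewrite concat_blocks_nil; lia.
  - rewrite concat_blocks_cons, !Y_app, Y_repeat, IH; lia.
Qed.

Lemma rho_concat_blocks (v : word) (a : list nat) : (0 < Z v)%nat ->
  rho (concat_blocks v a) =
  rho v + INR (list_sum a) / ((INR (length a) + 1) * INR (Z v)).
Proof.
  intro HZ. unfold rho. rewrite Y_concat_blocks, Z_concat_blocks.
  assert (0 < INR (Z v)) by (apply lt_0_INR; lia).
  assert (0 <= INR (length a)) by apply pos_INR.
  rewrite !plus_INR, !mult_INR, plus_INR. simpl INR. field. lra.
Qed.

(** The formula for [L(alpha, beta)] in terms of slopes. Whatever exponent list
    the definition of [L] picks, it equals [(rho alpha - rho beta)/(1 + rho alpha)]. *)
Lemma L_concat_blocks (alpha beta : word) (a0 : list nat) :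
  alpha = concat_blocks beta a0 -> (0 < Z beta)%nat ->
  L alpha beta = (rho alpha - rho beta) / (1 + rho alpha).
Proof.
  intros H0 HZ. unfold L.
  set (a := epsilon _ _).
  assert (Ha : alpha = concat_blocks beta a).
  { apply (epsilon_spec (inhabits (@nil nat)) (fun a => alpha = concat_blocks beta a)).
    eauto. }
  rewrite Ha, rho_concat_blocks by exact HZ.
  rewrite <- Y_plus_Z, Y_concat_blocks, Z_concat_blocks.
  unfold rho.
  assert (0 < INR (Z beta)) by (apply lt_0_INR; lia).
  assert (0 <= INR (Y beta)) by apply pos_INR.
  assert (0 <= INR (list_sum a)) by apply pos_INR.
  assert (0 <= INR (length a)) by apply pos_INR.
  rewrite !plus_INR, !mult_INR, !plus_INR. simpl INR.
  field. split; [lra|]. split; [lra|]. nra.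
Qed.

Section GeneratingSequence.

Variables (V : nat -> bool) (w0 : word) (ws : nat -> word).
Hypothesis gen_ws : gen_seq w0 V ws.

Lemma gen_seq_blocks (n : nat) : exists a, ws n = concat_blocks w0 a.
Proof.
  destruct gen_ws as [H0 [Hb _]]. induction n as [|n [a IH]].
  - exists []. rewrite concat_blocks_nil; auto.
  - destruct (Hb n) as [b [_ ->]]. rewrite IH, concat_blocks_trans. eauto.
Qed.

Lemma gen_seq_shift (m : nat) : gen_seq (ws m) V (fun k => ws (m + k)%nat).
Proof.
  destruct gen_ws as [H0 [Hb He]]. split; [f_equal; lia|]. split.
  - intro n. replace (m + S n)%nat with (S (m + n)) by lia. apply Hb.
  - intro n. apply He.
Qed.

Hypothesis Z_w0 : (0 < Z w0)%nat.

Lemma gen_seq_Z_pos (n : nat) : (0 < Z (ws n))%nat.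
Proof. destruct (gen_seq_blocks n) as [a ->]. rewrite Z_concat_blocks. lia. Qed.

(** Each step at least doubles the length, so the lengths are unbounded. *)
Lemma gen_seq_length (n : nat) : (n < length (ws n))%nat.
Proof.
  pose proof gen_seq_Z_pos as HZ. destruct gen_ws as [_ [Hb _]].
  induction n as [|n IH].
  - specialize (HZ 0%nat). rewrite <- Y_plus_Z. lia.
  - destruct (Hb n) as [b [Hl ->]].
    specialize (HZ n). rewrite <- Y_plus_Z in IH |- *.
    rewrite Y_concat_blocks, Z_concat_blocks. nia.
Qed.

Lemma gen_seq_rho_growing : Un_growing (fun n => rho (ws n)).
Proof.
  intro n. destruct gen_ws as [_ [Hb _]]. destruct (Hb n) as [b [_ ->]].
  rewrite rho_concat_blocks by apply gen_seq_Z_pos.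
  assert (0 < INR (Z (ws n))) by (apply lt_0_INR, gen_seq_Z_pos).
  assert (0 <= INR (length b)) by apply pos_INR.
  assert (0 <= INR (list_sum b) / ((INR (length b) + 1) * INR (Z (ws n))))
    by (apply Rle_mult_inv_pos; [apply pos_INR | nra]).
  lra.
Qed.

Lemma gen_seq_L (n : nat) :
  L (ws n) w0 = (rho (ws n) - rho w0) / (1 + rho (ws n)).
Proof. destruct (gen_seq_blocks n) as [a Ha]. eapply L_concat_blocks; eauto. Qed.

End GeneratingSequence.

Lemma extends_prefix (V : nat -> bool) (w1 w2 : word) :
  extends V w1 -> extends V w2 -> (length w1 <= length w2)%nat ->
  w1 = firstn (length w1) w2.
Proof.
  intros H1 H2 Hl. apply nth_ext with false false.
  - rewrite length_firstn. lia.
  - intros i Hi. rewrite nth_firstn. destruct (Nat.ltb_spec i (length w1)); [|lia].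
    rewrite <- H1, <- H2 by lia. auto.
Qed.

(** Deficit bound for a prefix [P] of a block word over [u]: complete blocks [u 1^k]
    never lower the slope below [rho u], and a final partial copy of [u]
    costs at most [Y u] ones against [Z u] zeros. *)
Lemma prefix_deficit (u : word) (c : list nat) (n : nat) :
  let P := firstn n (concat_blocks u c) in
  (Y u * Z P <= Y P * Z u + Y u * Z u)%nat.
Proof.
  revert n; induction c as [|k c IH]; intro n; simpl.
  - rewrite concat_blocks_nil. pose proof (Z_firstn_le n u). nia.
  - rewrite concat_blocks_cons, app_assoc, firstn_app.
    destruct (Nat.le_gt_cases n (length (u ++ repeat true k))) as [Hn|Hn].
    + replace (n - length (u ++ repeat true k))%nat with 0%nat by lia.
      simpl. rewrite app_nil_r.
      pose proof (Z_firstn_le n (u ++ repeat true k)) as HZ.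
      rewrite Z_app, Z_repeat in HZ. nia.
    + rewrite firstn_all2 by lia.
      specialize (IH (n - length (u ++ repeat true k))%nat). cbv zeta in IH.
      rewrite !Y_app, !Z_app, Y_repeat, Z_repeat. nia.
Qed.

Lemma prefix_rho_bound (u : word) (c : list nat) (n : nat) :
  let P := firstn n (concat_blocks u c) in
  (0 < Z u)%nat -> (0 < Z P)%nat ->
  rho u * (1 - INR (length u) / INR (length P)) <= rho P.
Proof.
  intros P HZu HZP. pose proof (prefix_deficit u c n) as HD. fold P in HD.
  assert (Hint : (Y u * Z P * length P <= Y P * Z u * length P + Y u * Z P * length u)%nat).
  { rewrite <- (Y_plus_Z P), <- (Y_plus_Z u).
    destruct (Nat.le_gt_cases (Z u * (Y P + Z P)) (Z P * (Y u + Z u))) as [Hc|Hc].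
    - pose proof (Nat.mul_le_mono_r _ _ (Y P + Z P) HD).
      pose proof (Nat.mul_le_mono_l _ _ (Y u) Hc). nia.
    - assert (Hs : (Y u * Z P <= Y P * Z u)%nat) by nia.
      pose proof (Nat.mul_le_mono_r _ _ (Y P + Z P) Hs). nia. }
  apply le_INR in Hint. rewrite !plus_INR, !mult_INR in Hint.
  assert (0 < INR (Z u)) by (apply lt_0_INR; lia).
  assert (0 < INR (Z P)) by (apply lt_0_INR; lia).
  assert (0 < INR (length P)) by (apply lt_0_INR; rewrite <- Y_plus_Z; lia).
  unfold rho.
  apply Rmult_le_reg_r with (INR (Z u) * INR (Z P) * INR (length P));
    [repeat apply Rmult_lt_0_compat; lra|].
  replace (INR (Y u) / INR (Z u) * (1 - INR (length u) / INR (length P)) *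
           (INR (Z u) * INR (Z P) * INR (length P)))
    with (INR (Y u) * INR (Z P) * INR (length P) - INR (Y u) * INR (Z P) * INR (length u))
    by (field; lra).
  replace (INR (Y P) / INR (Z P) * (INR (Z u) * INR (Z P) * INR (length P)))
    with (INR (Y P) * INR (Z u) * INR (length P)) by (field; lra).
  lra.
Qed.

Section TwoGeneratingSequences.

Variables (V : nat -> bool) (w0 u0 : word) (ws us : nat -> word).
Hypotheses (gen_ws : gen_seq w0 V ws) (gen_us : gen_seq u0 V us).
Hypotheses (Z_w0 : (0 < Z w0)%nat) (Z_u0 : (0 < Z u0)%nat).

(** Far along [ws], the slope comes arbitrarily close to (or exceeds) any
    slope reached along [us]: the long prefix [ws n] of [V] is a prefix of a
    block word over [us m]. *)
Lemma rho_eventually_exceeds (m : nat) (eps : R) : 0 < eps ->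
  exists N, forall n, (N <= n)%nat -> rho (us m) - eps < rho (ws n).
Proof.
  intro Heps. set (u := us m).
  destruct (INR_archimed eps (rho u * INR (length u)) Heps) as [N HN].
  exists (S N). intros n Hn.
  pose proof (gen_seq_length V w0 ws gen_ws Z_w0 n) as Hlen.
  destruct (gen_seq_blocks V u _ (gen_seq_shift V u0 us gen_us m) (length (ws n)))
    as [c Hc].
  assert (Hpre : ws n = firstn (length (ws n)) (concat_blocks u c)).
  { rewrite <- Hc. apply (extends_prefix V); [apply gen_ws | apply gen_us |].
    pose proof (gen_seq_length V u0 us gen_us Z_u0 (m + length (ws n))). lia. }
  pose proof (prefix_rho_bound u c (length (ws n))) as Hb. simpl in Hb.
  rewrite <- Hpre in Hb.
  specialize (Hb (gen_seq_Z_pos V u0 us gen_us Z_u0 m) (gen_seq_Z_pos V w0 ws gen_ws Z_w0 n)).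
  assert (Hru : 0 <= rho u * INR (length u))
    by (apply Rmult_le_pos; [apply rho_nonneg | apply pos_INR]).
  assert (HN' : INR N * eps <= INR (length (ws n)) * eps)
    by (apply Rmult_le_compat_r; [lra | apply le_INR; lia]).
  assert (0 < INR (length (ws n))) by (apply lt_0_INR; lia).
  assert (rho u * INR (length u) / INR (length (ws n)) < eps).
  { apply Rmult_lt_reg_r with (INR (length (ws n))); [lra|].
    unfold Rdiv. rewrite Rmult_assoc, Rinv_l by lra. lra. }
  replace (rho u * (1 - INR (length u) / INR (length (ws n))))
    with (rho u - rho u * INR (length u) / INR (length (ws n))) in Hb by (field; lra).
  lra.
Qed.

End TwoGeneratingSequences.

Lemma rho_limit_transfer (V : nat -> bool) (w0 u0 : word) (ws us : nat -> word) (r : R) :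
  gen_seq w0 V ws -> (0 < Z w0)%nat -> gen_seq u0 V us -> (0 < Z u0)%nat ->
  Un_cv (fun n => rho (us n)) r -> Un_cv (fun n => rho (ws n)) r.
Proof.
  intros Hw Hw0 Hu Hu0 Hc.
  assert (Hub : forall n, rho (us n) <= r)
    by (apply growing_ineq; [apply (gen_seq_rho_growing V u0) |]; auto).
  assert (Hwb : forall n, rho (ws n) <= r).
  { intro n. apply Rnot_lt_le. intro Hlt.
    destruct (rho_eventually_exceeds V u0 w0 us ws Hu Hw Hu0 Hw0 n (rho (ws n) - r))
      as [N HN]; [lra|].
    specialize (HN N (le_n N)). specialize (Hub N). lra. }
  intros eps Heps.
  destruct (Hc (eps / 2)) as [m Hm]; [lra|]. specialize (Hm m (le_n m)).
  unfold Rdist in Hm. rewrite Rabs_left1 in Hm by (specialize (Hub m); lra).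
  destruct (rho_eventually_exceeds V w0 u0 ws us Hw Hu Hw0 Hu0 m (eps / 2)) as [N HN];
    [lra|].
  exists N. intros n Hn. specialize (HN n Hn).
  unfold Rdist. rewrite Rabs_left1 by (specialize (Hwb n); lra). lra.
Qed.

Lemma rho_concat_blocks_le (v : word) (a : list nat) : (0 < Z v)%nat ->
  rho (concat_blocks v a) <= rho v -> list_sum a = 0%nat.
Proof.
  intros HZ Hle. rewrite rho_concat_blocks in Hle by exact HZ.
  destruct (list_sum a) as [|s] eqn:Hs; auto. exfalso.
  assert (0 < INR (Z v)) by (apply lt_0_INR; lia).
  assert (0 <= INR (length a)) by apply pos_INR.
  assert (0 < INR (S s) / ((INR (length a) + 1) * INR (Z v)))
    by (apply Rdiv_lt_0_compat; [apply lt_0_INR; lia | nra]).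
  lra.
Qed.

(** Without inserted 1s a block word is a power of [v], hence [|v|]-periodic. *)
Lemma concat_blocks_periodic (v : word) (a : list nat) (i : nat) :
  list_sum a = 0%nat -> (i + length v < length (concat_blocks v a))%nat ->
  nth (i + length v) (concat_blocks v a) false = nth i (concat_blocks v a) false.
Proof.
  revert i; induction a as [|k a IH]; intros i Hs Hl.
  - rewrite concat_blocks_nil in Hl. lia.
  - simpl in Hs. assert (k = 0%nat) by lia. subst k.
    rewrite concat_blocks_cons in Hl |- *. simpl in Hl |- *. rewrite length_app in Hl.
    rewrite (app_nth2 v _ false (n := (i + length v)%nat)) by lia.
    destruct (Nat.lt_ge_cases i (length v)) as [Hi|Hi].
    + rewrite (app_nth1 v _ false Hi), Nat.add_sub.
      unfold concat_blocks. rewrite app_nth1 by auto. auto.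
    + rewrite (app_nth2 v _ false (n := i)) by lia.
      replace (i + length v - length v)%nat with (i - length v + length v)%nat by lia.
      apply IH; lia.
Qed.

Lemma aperiodic_rho_increases (V : nat -> bool) (v : word) (vs : nat -> word) :
  gen_seq v V vs -> (0 < Z v)%nat -> aperiodic V -> exists n, rho v < rho (vs n).
Proof.
  intros Hvs HZ Hap. apply NNPP. intro Hnone.
  apply Hap. exists (length v), 0%nat. split; [rewrite <- Y_plus_Z; lia|].
  intros i _. set (k := (i + length v)%nat).
  pose proof (gen_seq_length V v vs Hvs HZ k) as Hl.
  destruct (gen_seq_blocks V v vs Hvs k) as [a Ha].
  assert (Hs : list_sum a = 0%nat).
  { apply (rho_concat_blocks_le v a HZ). rewrite <- Ha.
    apply Rnot_lt_le. intro. apply Hnone. eauto. }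
  destruct Hvs as [_ [_ He]].
  rewrite !(He k) by lia. rewrite Ha in *. apply concat_blocks_periodic; auto.
Qed.

Lemma growing_cv_or_infty (u : nat -> R) :
  Un_growing u -> (exists l, Un_cv u l) \/ cv_infty u.
Proof.
  intro Hg. destruct (classic (exists M, forall n, u n <= M)) as [[M HM]|Hunb].
  - left. destruct (growing_cv u Hg) as [l Hl]; [exists M; intros x [n ->]; apply HM | eauto].
  - right. intro M. apply NNPP. intro HN. apply Hunb. exists M. intro n.
    apply Rnot_lt_le. intro Hlt. apply HN. exists n. intros k Hk.
    pose proof (growing_prop u k n Hg Hk). lra.
Qed.

Lemma gap_limit_finite (x : nat -> R) (c r : R) : 0 <= r -> Un_cv x r ->
  Un_cv (fun n => (x n - c) / (1 + x n)) ((r - c) / (1 + r)).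
Proof.
  intros Hr Hx. apply (continuity_seq (fun t => (t - c) / (1 + t))); [|exact Hx].
  reg. lra.
Qed.

Lemma gap_limit_infinite (x : nat -> R) (c : R) : (forall n, 0 <= x n) -> cv_infty x ->
  Un_cv (fun n => (x n - c) / (1 + x n)) 1.
Proof.
  intros Hx Hinf.
  assert (H1x : cv_infty (fun n => 1 + x n)).
  { intro M. destruct (Hinf M) as [N HN]. exists N. intros n Hn. specialize (HN n Hn). lra. }
  pose proof (continuity_seq (fun t => 1 - (1 + c) * t) _ 0 ltac:(reg)
                (cv_infty_cv_0 _ H1x)) as Hlim.
  simpl in Hlim. rewrite Rmult_0_r, Rminus_0_r in Hlim.
  apply Un_cv_ext with (2 := Hlim). intro n. specialize (Hx n). field. lra.
Qed.

Lemma LV_finite (V : nat -> bool) (u u0 : word) (ws0 us : nat -> word) (r : R) :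
  gen_seq u V ws0 -> (0 < Z u)%nat -> gen_seq u0 V us -> (0 < Z u0)%nat ->
  Un_cv (fun n => rho (us n)) r -> LV_is V u ((r - rho u) / (1 + r)).
Proof.
  intros Hws0 Hu Hus Hu0 Hr. split; [eauto|]. intros ws Hws.
  apply Un_cv_ext with (fun n => (rho (ws n) - rho u) / (1 + rho (ws n))).
  { intro n. symmetry. apply (gen_seq_L V u ws Hws Hu). }
  apply gap_limit_finite.
  - apply Rle_trans with (rho (us 0%nat)); [apply rho_nonneg|].
    apply (growing_ineq (fun n => rho (us n))); [apply (gen_seq_rho_growing V u0) |]; auto.
  - exact (rho_limit_transfer V u u0 ws us r Hws Hu Hus Hu0 Hr).
Qed.

(** Outside [R*] the slopes along every generating sequence tend to [+oo]:
    a finite limit along one of them would be the limit along all of them. *)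
Lemma not_inRstar_rho_infty (V : nat -> bool) (w0 : word) (ws : nat -> word) :
  inR V -> ~ inRstar V -> gen_seq w0 V ws -> (0 < Z w0)%nat ->
  cv_infty (fun n => rho (ws n)).
Proof.
  intros HR Hnot Hws Hw0.
  destruct (growing_cv_or_infty _ (gen_seq_rho_growing V w0 ws Hws Hw0))
    as [[r Hr]|Hinf]; [exfalso|exact Hinf].
  apply Hnot. split; [exact HR|]. exists r. intros us Hus.
  exact (rho_limit_transfer V [false] w0 us ws r Hus ltac:(unfold Z; simpl; lia) Hws Hw0 Hr).
Qed.

Lemma LV_infinite (V : nat -> bool) (u : word) (ws0 : nat -> word) :
  inR V -> ~ inRstar V -> gen_seq u V ws0 -> (0 < Z u)%nat -> LV_is V u 1.
Proof.
  intros HR Hnot Hws0 Hu. split; [eauto|]. intros ws Hws.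
  apply Un_cv_ext with (fun n => (rho (ws n) - rho u) / (1 + rho (ws n))).
  { intro n. symmetry. apply (gen_seq_L V u ws Hws Hu). }
  apply gap_limit_infinite; [intro; apply rho_nonneg|].
  exact (not_inRstar_rho_infty V u ws HR Hnot Hws Hu).
Qed.

Lemma gap_ratio_bounds (c r : R) : 0 <= c < r -> 0 < (r - c) / (1 + r) < 1.
Proof.
  intros Hcr. split.
  - apply Rdiv_lt_0_compat; lra.
  - apply Rmult_lt_reg_r with (1 + r); [lra|].
    unfold Rdiv. rewrite Rmult_assoc, Rinv_l by lra. lra.
Qed.

Lemma rho_limit_gt_start (V : nat -> bool) (v u0 : word) (vs us : nat -> word) (r : R) :
  aperiodic V -> gen_seq v V vs -> (0 < Z v)%nat -> gen_seq u0 V us -> (0 < Z u0)%nat ->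
  Un_cv (fun n => rho (us n)) r -> rho v < r.
Proof.
  intros Hap Hvs Hv Hus Hu0 Hr.
  destruct (aperiodic_rho_increases V v vs Hvs Hv Hap) as [n Hn].
  enough (rho (vs n) <= r) by lra.
  apply (growing_ineq (fun n => rho (vs n))); [apply (gen_seq_rho_growing V v); auto|].
  exact (rho_limit_transfer V v u0 vs us r Hvs Hv Hus Hu0 Hr).
Qed.

Lemma LV_along_generating_sequence (V : nat -> bool) (u0 : word) (us : nat -> word) (r : R) :
  gen_seq u0 V us -> (0 < Z u0)%nat -> Un_cv (fun n => rho (us n)) r ->
  exists ls : nat -> R,
    (forall n, LV_is V (us n) (ls n)) /\ (forall n, ls (S n) <= ls n) /\ Un_cv ls 0.
Proof.
  intros Hus Hu0 Hr.
  assert (Hrpos : 0 <= r).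
  { apply Rle_trans with (rho (us 0%nat)); [apply rho_nonneg|].
    apply (growing_ineq (fun n => rho (us n))); [apply (gen_seq_rho_growing V u0) |]; auto. }
  exists (fun n => (r - rho (us n)) / (1 + r)). split; [|split].
  - intro n. apply (LV_finite V (us n) u0 (fun k => us (n + k)%nat) us r); auto.
    + apply (gen_seq_shift V u0 us Hus).
    + apply (gen_seq_Z_pos V u0 us Hus Hu0).
  - intro n. unfold Rdiv. apply Rmult_le_compat_r; [left; apply Rinv_0_lt_compat; lra|].
    pose proof (gen_seq_rho_growing V u0 us Hus Hu0 n). simpl in *. lra.
  - pose proof (continuity_seq (fun t => (r - t) / (1 + r)) _ r ltac:(reg; lra) Hr) as Hlim.
    simpl in Hlim. replace ((r - r) / (1 + r)) with 0 in Hlim by (field; lra). exact Hlim.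
Qed.

(** Theorem 8. *)
Theorem mainTheorem8 (V : nat -> bool) (v : word) (vs : nat -> word) :
  inR V -> inF v -> V_built V v -> gen_seq v V vs ->
  (forall n : nat, (1 <= n)%nat ->
     L (vs n) v = (rho (vs n) - rho v) / (1 + rho (vs n))) /\
  exists l : R,
    LV_is V v l /\
    (inRstar V ->
       forall r : R, rhoV_is V (Fin r) ->
         l = (r - rho v) / (1 + r) /\
         l = 1 - (1 + rho v) / (1 + r) /\
         0 < l < 1 /\
         (forall us : nat -> word, gen_seq [false] V us ->
            exists ls : nat -> R,
              (forall n, LV_is V (us n) (ls n)) /\
              (forall n, ls (S n) <= ls n) /\
              Un_cv ls 0)) /\
    (~ inRstar V -> l = 1).
Proof.
  intros HR Hv _ Hvs.
  pose proof (inF_Z_pos v Hv) as Zv.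
  assert (Zf : (0 < Z [false])%nat) by (unfold Z; simpl; lia).
  split; [intros n _; exact (gen_seq_L V v vs Hvs Zv n)|].
  destruct (classic (inRstar V)) as [[_ [r0 Hr0]]|Hst].
  - destruct HR as [Hap [us0 Hus0]]. pose proof (Hr0 us0 Hus0) as Hc0. simpl in Hc0.
    exists ((r0 - rho v) / (1 + r0)).
    split; [exact (LV_finite V v [false] vs us0 r0 Hvs Zv Hus0 Zf Hc0)|].
    split; [|intro Hnot; exfalso; apply Hnot; split; [split; eauto | eauto]].
    intros _ r Hr. pose proof (Hr us0 Hus0) as Hc. simpl in Hc.
    assert (r = r0) by exact (UL_sequence _ _ _ Hc Hc0). subst r.
    pose proof (rho_limit_gt_start V v [false] vs us0 r0 Hap Hvs Zv Hus0 Zf Hc0).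
    pose proof (rho_nonneg v).
    split; [reflexivity|]. split; [field; lra|]. split; [apply gap_ratio_bounds; lra|].
    intros us Hus. exact (LV_along_generating_sequence V [false] us r0 Hus Zf (Hr0 us Hus)).
  - exists 1. split; [exact (LV_infinite V v vs HR Hst Hvs Zv)|].
    split; [intros Hin; contradiction | reflexivity].
Qed.
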